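(* For every integer $k\ge 0$, as $n\to\infty$, \[ \left\langle\left(S_{2,n}-\frac{n}{4}\right)^k\right\rangle\sim\frac{k!}{2^{\lfloor (k+1)/2\rfloor}\,\lfloor k/2\rfloor!\,4^k}\,n^{\lfloor k/2\rfloor}. \] Equivalently, for every integer $s\ge 0$, \[ \left\langle\left(S_{2,n}-\frac{n}{4}\right)^{2s}\right\rangle\sim\frac{(2s-1)!!}{4^{2s}}n^s,\qquad \left\langle\left(S_{2,n}-\frac{n}{4}\right)^{2s+1}\right\rangle\sim\frac{(2s+1)!!}{2\cdot 4^{2s+1}}n^s. \]
   Context: For $n\ge 1$, let $\Omega_n$ be the set of rooted plane (ordered) full binary trees with $n$ leaves (every internal node has exactly two children, left and right distinguished). The random model is $\Omega_n$ with the uniform probability measure $P_n$; $\langle\cdot\rangle$ denotes expectation with respect to $P_n$. Horton–Strahler ordering: every leaf has order 1; an internal node whose two children have different orders $r_1\neq r_2$ has order $\max\{r_1,r_2\}$; an internal node whose two children both have order $r$ has order $r+1$. A branch of order $r$ is a maximal connected path consisting of nodes all of order $r$. $S_{2,n}(\tau)$ is the number of branches of order $2$ in $\tau\in\Omega_n$. For sequences, $a_n\sim b_n$ means $\lim_{n\to\infty}a_n/b_n=1$. Convention: $(-1)!!=1$. *)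

From Stdlib Require Import Reals Lra Lia Arith List.
From Coquelicot Require Import Coquelicot.
Import ListNotations.
Open Scope R_scope.

Inductive tree : Type :=
| Leaf : tree
| Node : tree -> tree -> tree.

Fixpoint leaves (t : tree) : nat :=
  match t with
  | Leaf => 1%nat
  | Node l r => (leaves l + leaves r)%nat
  end.

(* gen fuel n: all trees with exactly n leaves, provided fuel >= n
   (a tree with n >= 2 leaves splits as Node l r with leaves l = i,
   leaves r = n - i, 1 <= i <= n-1). *)
Fixpoint gen (fuel n : nat) : list tree :=
  match fuel with
  | O => []
  | S f =>
      match n with
      | O => []
      | S O => [Leaf]
      | _ => flat_map (fun i => flat_map (fun l => map (fun r => Node l r)
                                                   (gen f (n - i)))
                                       (gen f i))
                      (seq 1 (n - 1))
      end
  end.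

Definition Omega (n : nat) : list tree := gen n n.

Fixpoint hs_order (t : tree) : nat :=
  match t with
  | Leaf => 1%nat
  | Node l r =>
      if Nat.eqb (hs_order l) (hs_order r) then S (hs_order l)
      else Nat.max (hs_order l) (hs_order r)
  end.

(* Number of nodes of order r in t whose parent (of order p for the root of t)
   does not have order r.  Nodes of order r form disjoint vertical paths
   (an order-r node never has two order-r children), and each maximal such path
   (= branch of order r) has exactly one such top node. *)
Fixpoint branch_tops (r p : nat) (t : tree) : nat :=
  ((if (Nat.eqb (hs_order t) r && negb (Nat.eqb p r))%bool then 1 else 0) +
   match t with
   | Leaf => 0
   | Node a b => branch_tops r (hs_order t) a + branch_tops r (hs_order t) b
   end)%nat.

(* Number of branches of order r (the root has no parent: use parent order 0). *)
Definition branches (r : nat) (t : tree) : nat := branch_tops r 0 t.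

Definition S2 (t : tree) : nat := branches 2 t.

Definition expect (n : nat) (f : tree -> R) : R :=
  fold_right Rplus 0 (map f (Omega n)) / INR (length (Omega n)).

Definition asymp_equiv (a b : nat -> R) : Prop :=
  is_lim_seq (fun n => a n / b n) 1.

(** The statistic [S2] is additive over the two subtrees of the root except at
    the cherry [Node Leaf Leaf], so the polynomials P_n(x) = sum_{t in Omega_n} x^(S2 t)
    satisfy P_n = sum_{0<i<n} P_i P_(n-i) for n >= 3, with P_1 = 1 and P_2 = x.  Hence
    G(z) = 1 - 2 sum_n P_n z^n satisfies G^2 = D := 1 - 4z - 4(x-1)z^2, so 2 D G' = D' G,
    which is the recurrence n P_n = (4n-6) P_(n-1) + 4(x-1)(n-3) P_(n-2).  For the uniform
    expectation E_n it reads E_(n+2) f = E_(n+1) f + r_n E_n [f(. + 1) - f] with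
    r_n = (n^2-1)/(4n^2-1) = 1/4 + O(n^-2).

    Expanding binomially, the increment of the central moment
    mu_(n,k) = E_n (S2 - n/4)^k from n to n+1 is a combination of lower central moments.
    By strong induction on k it is asymptotic to floor(k/2) a_k n^(floor(k/2)-1), where a_k
    is the constant of the theorem, and the Stolz-Cesaro theorem turns this into
    mu_(n,k) ~ a_k n^(floor(k/2)). *)

From Stdlib Require Import Reals Arith Lra Lia List.
From Coquelicot Require Import Coquelicot.
From mathcomp Require ssreflect ssrfun ssrbool eqtype ssrnat seq bigop ssralg poly ssrint ssrnum.
From mathcomp Require algebra_tactics.ring.
Import ListNotations.

(** * Trees and the statistic [S2] *)

Lemma hs_order_ge1 t : (1 <= hs_order t)%nat.
Proof. induction t; simpl; [lia|]. destruct (Nat.eqb _ _); lia. Qed.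

Lemma hs_order_1_Leaf t : hs_order t = 1%nat -> t = Leaf.
Proof.
  destruct t as [|l r]; [reflexivity|]. simpl.
  pose proof (hs_order_ge1 l). pose proof (hs_order_ge1 r).
  destruct (Nat.eqb_spec (hs_order l) (hs_order r)); lia.
Qed.

Lemma branch_tops_S2 p t :
  (branch_tops 2 p t + (if (Nat.eqb (hs_order t) 2 && Nat.eqb p 2)%bool then 1 else 0) = S2 t)%nat.
Proof.
  unfold S2, branches.
  destruct t; cbn [branch_tops]; destruct (Nat.eqb p 2), (Nat.eqb (hs_order _) 2); simpl; lia.
Qed.

Lemma S2_Node l r : l <> Leaf \/ r <> Leaf -> S2 (Node l r) = (S2 l + S2 r)%nat.
Proof.
  intros Hlr.
  assert (Hord : ~ (hs_order l = 1 /\ hs_order r = 1)%nat).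
  { intros [Hl Hr]. apply hs_order_1_Leaf in Hl, Hr. tauto. }
  pose proof (branch_tops_S2 (hs_order (Node l r)) l) as Hl.
  pose proof (branch_tops_S2 (hs_order (Node l r)) r) as Hr.
  unfold S2 at 1, branches. simpl branch_tops. simpl hs_order in *.
  pose proof (hs_order_ge1 l). pose proof (hs_order_ge1 r).
  revert Hl Hr Hord. generalize (hs_order l) (hs_order r). intros a b.
  destruct (Nat.eqb_spec a b);
    [destruct (Nat.eqb_spec (S a) 2) | destruct (Nat.eqb_spec (Nat.max a b) 2)];
  destruct (Nat.eqb_spec a 2); destruct (Nat.eqb_spec b 2); simpl; lia.
Qed.

Lemma gen_S f n : (2 <= n)%nat ->
  gen (S f) n = flat_map (fun i => flat_map (fun l => map (fun r => Node l r) (gen f (n - i)))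
                                            (gen f i)) (seq 1 (n - 1)).
Proof. intros Hn. destruct n as [|[|n]]; [lia | lia | reflexivity]. Qed.

Lemma gen_fuel f1 f2 n : (n <= f1)%nat -> (n <= f2)%nat -> gen f1 n = gen f2 n.
Proof.
  revert f2 n. induction f1 as [|f1 IH]; intros [|f2] n H1 H2;
    try (replace n with 0%nat by lia; reflexivity).
  destruct n as [|[|n]]; try reflexivity. rewrite !gen_S by lia.
  rewrite !flat_map_concat_map. f_equal. apply map_ext_in. intros i Hi%in_seq.
  rewrite (IH f2 i), (IH f2 (S (S n) - i)%nat) by lia. reflexivity.
Qed.

Lemma Omega_Node n : (2 <= n)%nat ->
  Omega n = flat_map (fun i => flat_map (fun l => map (fun r => Node l r) (Omega (n - i)))
                                        (Omega i)) (seq 1 (n - 1)).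
Proof.
  intros Hn. unfold Omega. destruct n as [|n]; [lia|]. rewrite gen_S by lia.
  rewrite !flat_map_concat_map. f_equal. apply map_ext_in. intros i Hi%in_seq.
  rewrite (gen_fuel n i i), (gen_fuel n (S n - i) (S n - i)) by lia.
  reflexivity.
Qed.

Lemma gen_leaves f n t : In t (gen f n) -> leaves t = n.
Proof.
  revert n t. induction f as [|f IH]; intros n t H; [destruct H|].
  destruct n as [|[|n]].
  - destruct H.
  - destruct H as [<-|[]]. reflexivity.
  - rewrite gen_S in H by lia. apply in_flat_map in H as [i [Hi%in_seq H]].
    apply in_flat_map in H as [l [Hl%IH H]]. apply in_map_iff in H as [r [<- Hr%IH]].
    simpl. lia.
Qed.

Lemma S2_le_leaves t : (S2 t <= leaves t)%nat.
Proof.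
  induction t as [|l IHl r IHr]; [compute; lia|].
  destruct l as [|l1 l2], r as [|r1 r2]; [compute; lia|..];
    rewrite S2_Node by (left + right; discriminate); cbn [leaves] in *; lia.
Qed.

Lemma S2_le_Omega n t : In t (Omega n) -> (S2 t <= n)%nat.
Proof. intros H. rewrite <- (gen_leaves n n t H). apply S2_le_leaves. Qed.

(** * Generating polynomials *)

Definition count_S2 (n k : nat) : nat := count_occ Nat.eq_dec (map S2 (Omega n)) k.

Module GeneratingPolynomial.
Import ssreflect ssrfun ssrbool eqtype ssrnat seq bigop ssralg poly ssrint ssrnum.
Import algebra_tactics.ring.
Import GRing.Theory Num.Theory.
Local Open Scope ring_scope.

Section Convolution.
Context {R : comPzRingType}.
Implicit Types a b : nat -> R.

Definition conv a b n : R := \sum_(0 <= i < n.+1) a i * b (n - i)%N.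

Lemma convC a b n : conv a b n = conv b a n.
Proof.
  rewrite /conv big_nat_rev; apply: eq_big_nat => i /andP [_ Hi].
  by rewrite add0n subSS subKn 1?mulrC // -ltnS.
Qed.

Lemma conv_weight a b n :
  conv (fun i => i%:R * a i) b n + conv a (fun i => i%:R * b i) n = n%:R * conv a b n :> R.
Proof.
  rewrite /conv -big_split mulr_sumr /=; apply: eq_big_nat => i /andP [_ Hi].
  have -> : n%:R = i%:R + (n - i)%N%:R :> R by rewrite -natrD subnKC // -ltnS.
  ring.
Qed.

Lemma conv_eq0 a b : a 0%N = 1 -> (forall n, conv a b n = 0) -> forall n, b n = 0.
Proof.
  move=> a0 ab0 n; elim/ltn_ind: n => n IH.
  have := ab0 n; rewrite /conv big_nat_recl // a0 subn0 mul1r big1_seq ?addr0 //.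
  move=> i /andP [_]; rewrite mem_index_iota => /andP [_ Hi].
  by rewrite IH ?mulr0 // ltn_subrL (leq_ltn_trans _ Hi).
Qed.

End Convolution.

Section SquareRecurrence.
Context {R : idomainType}.
Variables (u : R) (g : nat -> R).

Definition discr n : R := match n with 0 => 1 | 1 => -4 | 2 => -4 * u | _ => 0 end.

Hypotheses (two_neq0 : 2%:R != 0 :> R) (g0 : g 0%N = 1)
  (g_sq : forall n, conv g g n = discr n).

Let dg i := i%:R * g i.

Lemma conv_dg n : conv g dg n *+ 2 = n%:R * discr n.
Proof. by rewrite -g_sq -conv_weight [conv dg g n]convC mulr2n. Qed.

(* Since G^2 = D, G (2 D G' - D' G) = D (2 G G') - D' G^2 = 0 and G is invertible;
   [ode_residual] is the coefficient sequence of (2 D G' - D' G) / 2. *)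
Definition ode_residual n : R :=
  n.+1%:R * g n.+1 - (4 * n%:R - 2) * g n
  - (if n is n'.+1 then 4 * u * (n%:R - 2) * g n' else 0).

Lemma conv_ode_residual n : conv g ode_residual n = 0.
Proof.
  have T3 : (\sum_(0 <= i < n.+1) g i *
               (if (n - i)%N is k.+1 then 4 * u * ((n - i)%:R - 2) * g k else 0)) *+ 2
            = if n is n'.+1 then 4 * u * (n'%:R * discr n' - 2 * discr n') else 0.
    case: n => [|n]; first by rewrite big_nat1 mulr0 mul0rn.
    rewrite big_nat_recr //= subnn mulr0 addr0 -conv_dg -g_sq [2%:R * _]mulr_natl -mulrnBl mulrnAr.
    congr (_ *+ 2); rewrite /conv -sumrB mulr_sumr.
    apply: eq_big_nat => i /andP [_ Hi]; rewrite subSn // /dg.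
    have -> : (n - i).+1%:R = (n - i)%N%:R + 1 :> R by rewrite -addn1 natrD.
    ring.
  have T1 : (\sum_(0 <= i < n.+1) g i * ((n - i).+1%:R * g (n - i).+1)) *+ 2
            = n.+1%:R * discr n.+1.
    rewrite -conv_dg /conv [X in _ = X *+ 2]big_nat_recr //= subnn /dg mul0r mulr0 addr0.
    by congr (_ *+ 2); apply: eq_big_nat => i /andP [_ Hi]; rewrite subSn.
  have T2 : (\sum_(0 <= i < n.+1) g i * ((4 * (n - i)%:R - 2) * g (n - i)%N)) *+ 2
            = 4 * (n%:R * discr n) - 4 * discr n.
    have -> : \sum_(0 <= i < n.+1) g i * ((4 * (n - i)%:R - 2) * g (n - i)%N)
              = 4 * conv g dg n - 2 * conv g g n.
      by rewrite /conv !mulr_sumr -sumrB; apply: eq_bigr => i _; rewrite /dg; ring.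
    by rewrite mulrnBl -mulrnAr conv_dg g_sq; ring.
  apply: (mulfI two_neq0); rewrite mulr0 mulr_natl.
  have -> : conv g ode_residual n =
      \sum_(0 <= i < n.+1) g i * ((n - i).+1%:R * g (n - i).+1)
      - \sum_(0 <= i < n.+1) g i * ((4 * (n - i)%:R - 2) * g (n - i)%N)
      - \sum_(0 <= i < n.+1) g i *
          (if (n - i)%N is k.+1 then 4 * u * ((n - i)%:R - 2) * g k else 0).
    rewrite -!sumrB; apply: eq_bigr => i _; rewrite /ode_residual.
    by case: (n - i)%N => [|k]; ring.
  rewrite !mulrnBl T1 T2 T3.
  by case: n {T1 T2 T3} => [|[|[|[|n]]]] /=; ring.
Qed.

Lemma square_recurrence n :
  n.+2%:R * g n.+2 = (4 * n.+1%:R - 2) * g n.+1 + 4 * u * (n.+1%:R - 2) * g n.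
Proof.
  apply/eqP; rewrite -subr_eq0 -(conv_eq0 _ _ g0 conv_ode_residual n.+1) /ode_residual.
  by apply/eqP; ring.
Qed.

End SquareRecurrence.

Lemma big_In_ext {T : Type} {V : nmodType} (F G : T -> V) (l : list T) :
  (forall x, List.In x l -> F x = G x) -> \sum_(x <- l) F x = \sum_(x <- l) G x.
Proof.
  elim: l => [|a l IH] H; first by rewrite !big_nil.
  by rewrite !big_cons H /= ?IH // => [x Hx|]; [apply: H; right | left].
Qed.

Lemma big_flat_map {A B : Type} {V : nmodType} (g : A -> list B) (F : B -> V) (l : list A) :
  \sum_(x <- List.flat_map g l) F x = \sum_(y <- l) \sum_(x <- g y) F x.
Proof. by elim: l => [|a l IH]; rewrite ?big_nil //= big_cat big_cons IH. Qed.

Lemma big_list_map {A B : Type} {V : nmodType} (g : A -> B) (F : B -> V) (l : list A) :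
  \sum_(x <- List.map g l) F x = \sum_(y <- l) F (g y).
Proof. by elim: l => [|a l IH]; rewrite ?big_nil //= !big_cons IH. Qed.

Definition P n : {poly int} := \sum_(t <- Omega n) 'X^(S2 t).

Lemma P_Node n : (3 <= n)%N -> P n = \sum_(1 <= i < n) P i * P (n - i)%N.
Proof.
  move=> Hn; rewrite /P Omega_Node; last by apply/leP; apply: leq_trans Hn.
  have -> : index_iota 1 n = List.seq 1 (n - 1).
    by rewrite /index_iota; elim: (n - 1)%N 1%N => [|k IH] a //=; rewrite IH.
  rewrite big_flat_map; apply: big_In_ext => i /List.in_seq Hi.
  rewrite big_flat_map big_distrl; apply: big_In_ext => l /gen_leaves Hl.
  rewrite big_list_map big_distrr; apply: big_In_ext => r /gen_leaves Hr.
  rewrite S2_Node ?exprD //.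
  case: l r Hl Hr => [|l1 l2] [|r1 r2] /= Hl Hr; try by [left | right].
  move/leP: Hn; lia.
Qed.

Lemma P1 : P 1 = 1.
Proof. by rewrite /P /= big_cons big_nil expr0 addr0. Qed.

Lemma P2 : P 2 = 'X.
Proof. by rewrite /P /= big_cons big_nil addr0. Qed.

Definition g n : {poly int} := if n is 0 then 1 else - (P n *+ 2).

Lemma conv_g n : conv g g n = discr ('X - 1) n.
Proof.
  case: n => [|m]; first by rewrite /conv big_nat1 /g mulr1.
  rewrite /conv big_nat_recl // big_nat_recr //= subn0 subnn.
  have -> : \sum_(0 <= i < m) g i.+1 * g (m.+1 - i.+1)%N
            = (\sum_(0 <= i < m) P i.+1 * P (m - i)%N) *+ 4.
    rewrite -sumrMnl; apply: eq_big_nat => i /andP [_ Hi].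
    rewrite subSS /g; case E: (m - i)%N => [|k]; first by move: Hi; rewrite -subn_gt0 E.
    by rewrite mulrNN mulrnAl mulrnAr -mulrnA.
  case: m => [|[|m]].
  - by rewrite big_nil /g P1; ring.
  - by rewrite big_nat1 /g P1 P2; ring.
  - have -> : \sum_(0 <= i < m.+2) P i.+1 * P (m.+2 - i)%N = P m.+3.
      by rewrite (P_Node m.+3) // big_add1.
    rewrite /g; ring.
Qed.

Lemma two_neq0_poly_int : 2%:R != 0 :> {poly int}.
Proof. by rewrite -polyC_natr polyC_eq0. Qed.

Lemma P_rec m :
  m.+3%:R * P m.+3 = (4 * m.+2%:R - 2) * P m.+2 + 4 * ('X - 1) * m%:R * P m.+1.
Proof.
  have := square_recurrence _ _ two_neq0_poly_int (erefl : g 0 = 1) conv_g m.+1.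
  have -> : m.+2%:R - 2 = m%:R :> {poly int} by rewrite -addn2 natrD addrK.
  rewrite /g => rec.
  apply: (mulfI two_neq0_poly_int); apply: oppr_inj.
  have -> : - (2%:R * (m.+3%:R * P m.+3)) = m.+3%:R * - (P m.+3 *+ 2) by ring.
  rewrite rec; ring.
Qed.

Lemma coef_P n k : (P n)`_k = (count_S2 n k)%:R.
Proof.
  rewrite /P /count_S2 coef_sum; elim: (Omega n) => [|t l IH] /=; first by rewrite big_nil.
  rewrite big_cons coefXn IH; case: Nat.eq_dec => [->|/eqP Hk].
  - by rewrite eqxx -natrD add1n.
  - by rewrite eq_sym (negbTE Hk) add0r.
Qed.

Lemma count_S2_rec m k :
  (m.+3 * count_S2 m.+3 k + 4 * m * count_S2 m.+1 k
   = (4 * m + 6) * count_S2 m.+2 k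
     + 4 * m * (if k is k'.+1 then count_S2 m.+1 k' else 0))%N.
Proof.
  have E : m.+3%:R * P m.+3 + (4 * m)%N%:R * P m.+1
           = (4 * m + 6)%N%:R * P m.+2 + (4 * m)%N%:R * ('X * P m.+1).
    have -> : (4 * m + 6)%N%:R = 4 * m.+2%:R - 2 :> {poly int}.
      by rewrite natrD natrM; ring.
    by rewrite P_rec natrM; ring.
  move: (congr1 (fun p : {poly int} => p`_k) E).
  rewrite -[m.+3%:R]polyC_natr -[(4 * m)%N%:R]polyC_natr -[(4 * m + 6)%N%:R]polyC_natr.
  rewrite !coefD !coefCM coefXM !coef_P.
  case: k => [|k]; rewrite /= ?mulr0 ?addr0 ?muln0 ?addn0 ?coef_P -!natrM -!natrD.
  all: by move=> /eqP; rewrite eqr_nat => /eqP.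
Qed.

End GeneratingPolynomial.

(** * Expectations under the uniform measure *)

Open Scope R_scope.

Lemma sum_delta (a B : nat) (f : nat -> R) : (a <= B)%nat ->
  sum_f_R0 (fun m => (if Nat.eq_dec a m then 1 else 0) * f m) B = f a.
Proof.
  induction B as [|B IH]; intros Ha.
  - replace a with 0%nat by lia. simpl. ring.
  - rewrite tech5. destruct (Nat.eq_dec a (S B)) as [->|Hne].
    + rewrite sum_eq_R0; [ring|]. intros m Hm. destruct (Nat.eq_dec (S B) m); [lia | ring].
    + rewrite IH by lia. ring.
Qed.

Lemma sum_count_occ (s : list nat) (f : nat -> R) (B : nat) :
  (forall m, In m s -> (m <= B)%nat) ->
  fold_right Rplus 0 (map f s) = sum_f_R0 (fun m => INR (count_occ Nat.eq_dec s m) * f m) B.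
Proof.
  induction s as [|a s IH]; intros Hs.
  - rewrite sum_eq_R0; [reflexivity | intros; simpl; ring].
  - simpl. rewrite IH, <- (sum_delta a B f), <- plus_sum by (intros; apply Hs; simpl; auto).
    apply sum_eq. intros m _. destruct (Nat.eq_dec a m); rewrite ?S_INR; ring.
Qed.

Definition tree_sum (n : nat) (f : nat -> R) : R :=
  fold_right Rplus 0 (map (fun t => f (S2 t)) (Omega n)).

Lemma tree_sum_ext n f g : (forall m, f m = g m) -> tree_sum n f = tree_sum n g.
Proof. intros H. unfold tree_sum. f_equal. apply map_ext. auto. Qed.

Lemma tree_sum_lin n f g a b :
  tree_sum n (fun m => a * f m + b * g m) = a * tree_sum n f + b * tree_sum n g.
Proof. unfold tree_sum. induction (Omega n); simpl; [ring|]. rewrite IHl. ring. Qed.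

Lemma tree_sum_sub n f g : tree_sum n (fun m => f m - g m) = tree_sum n f - tree_sum n g.
Proof.
  replace (tree_sum n f - tree_sum n g) with (1 * tree_sum n f + (-1) * tree_sum n g) by ring.
  rewrite <- tree_sum_lin. apply tree_sum_ext. intros. ring.
Qed.

Lemma tree_sum_count n f B : (n <= B)%nat ->
  tree_sum n f = sum_f_R0 (fun m => INR (count_S2 n m) * f m) B.
Proof.
  intros HB. unfold tree_sum. rewrite <- (map_map S2 f). apply sum_count_occ.
  intros m [t [<- Ht]]%in_map_iff. apply S2_le_Omega in Ht. lia.
Qed.

Lemma tree_sum_rec m f :
  INR (S (S (S m))) * tree_sum (S (S (S m))) f + 4 * INR m * tree_sum (S m) f
  = (4 * INR m + 6) * tree_sum (S (S m)) f + 4 * INR m * tree_sum (S m) (fun k => f (S k)).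
Proof.
  set (c n k := INR (count_S2 n k)).
  rewrite (tree_sum_count (S (S (S m))) f (S (S (S m)))), (tree_sum_count (S m) f (S (S (S m)))),
    (tree_sum_count (S (S m)) f (S (S (S m)))), (tree_sum_count (S m) _ (S (S m))) by lia.
  replace (sum_f_R0 _ (S (S m))) with
    (sum_f_R0 (fun k => (match k with 0 => 0 | S k' => c (S m) k' end) * f k) (S (S (S m)))).
  2:{ rewrite decomp_sum by lia. rewrite Rmult_0_l, Rplus_0_l. reflexivity. }
  rewrite !scal_sum, <- !plus_sum. apply sum_eq. intros k _.
  pose proof (f_equal INR (GeneratingPolynomial.count_S2_rec m k)) as E.
  rewrite !plus_INR, !mult_INR, !plus_INR, !mult_INR, !S_INR in E. rewrite !S_INR.
  apply Rminus_diag_uniq. set (y := f k). destruct k; unfold c; simpl INR in *;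
    match type of E with ?a = ?b => transitivity (y * (a - b)); [ring | rewrite E; ring] end.
Qed.

Definition num_trees (n : nat) : R := INR (length (Omega n)).

Lemma tree_sum_1 n : tree_sum n (fun _ => 1) = num_trees n.
Proof.
  unfold tree_sum, num_trees. induction (Omega n) as [|t l IH]; [reflexivity|].
  cbn [map fold_right length]. rewrite IH, S_INR. ring.
Qed.

Lemma num_trees_rec n : INR (S (S n)) * num_trees (S (S n)) = (4 * INR n + 2) * num_trees (S n).
Proof.
  destruct n as [|m].
  - compute. ring.
  - pose proof (tree_sum_rec m (fun _ => 1)) as E. rewrite !tree_sum_1 in E.
    rewrite (S_INR m). lra.
Qed.

Lemma num_trees_pos n : (1 <= n)%nat -> 0 < num_trees n.
Proof.
  induction n as [|[|n] IH]; intros Hn; [lia | compute; lra |].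
  pose proof (num_trees_rec n) as E. pose proof (pos_INR n).
  assert (0 < num_trees (S n)) by (apply IH; lia).
  assert (0 < INR (S (S n))) by (apply lt_0_INR; lia).
  apply (Rmult_lt_reg_l (INR (S (S n)))); [assumption|]. rewrite E. nra.
Qed.

Definition expect_S2 (n : nat) (f : nat -> R) : R := expect n (fun t => f (S2 t)).

Lemma expect_S2_tree_sum n f : expect_S2 n f = tree_sum n f / num_trees n.
Proof. reflexivity. Qed.

Lemma expect_S2_ext n f g : (forall m, f m = g m) -> expect_S2 n f = expect_S2 n g.
Proof. intros H. rewrite !expect_S2_tree_sum, (tree_sum_ext n f g H). reflexivity. Qed.

Lemma expect_S2_lin n f g a b :
  expect_S2 n (fun m => a * f m + b * g m) = a * expect_S2 n f + b * expect_S2 n g.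
Proof. rewrite !expect_S2_tree_sum, tree_sum_lin. unfold Rdiv. ring. Qed.

Lemma expect_S2_scal n f a : expect_S2 n (fun m => a * f m) = a * expect_S2 n f.
Proof.
  rewrite <- (Rplus_0_r (a * _)), <- (Rmult_0_l (expect_S2 n f)), <- expect_S2_lin.
  apply expect_S2_ext. intros. ring.
Qed.

Lemma expect_S2_sub n f g : expect_S2 n (fun m => f m - g m) = expect_S2 n f - expect_S2 n g.
Proof. rewrite !expect_S2_tree_sum, tree_sum_sub. unfold Rdiv. ring. Qed.

Lemma expect_S2_sum n (g : nat -> nat -> R) K :
  expect_S2 n (fun m => sum_f_R0 (fun i => g i m) K) = sum_f_R0 (fun i => expect_S2 n (g i)) K.
Proof.
  induction K as [|K IH]; [reflexivity|]. simpl. rewrite <- IH.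
  rewrite <- (Rmult_1_l (expect_S2 n (fun m => sum_f_R0 (fun i => g i m) K))),
    <- (Rmult_1_l (expect_S2 n (g (S K)))).
  rewrite <- expect_S2_lin. apply expect_S2_ext. intros. ring.
Qed.

Lemma expect_S2_1 n : (1 <= n)%nat -> expect_S2 n (fun _ => 1) = 1.
Proof.
  intros Hn. rewrite expect_S2_tree_sum, tree_sum_1.
  apply Rinv_r, Rgt_not_eq, num_trees_pos, Hn.
Qed.

Lemma expect_S2_singleton n t f : Omega n = [t] -> expect_S2 n f = f (S2 t).
Proof.
  intros H. rewrite expect_S2_tree_sum. unfold tree_sum, num_trees. rewrite H. simpl. field.
Qed.

Definition ratio (n : nat) : R := (INR n ^ 2 - 1) / (4 * INR n ^ 2 - 1).

Lemma expect_S2_rec n f : (1 <= n)%nat ->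
  expect_S2 (S (S n)) f = expect_S2 (S n) f + ratio n * expect_S2 n (fun k => f (S k) - f k).
Proof.
  intros Hn. destruct n as [|m]; [lia|].
  pose proof (tree_sum_rec m f) as Rec.
  pose proof (num_trees_rec (S m)) as N3. pose proof (num_trees_rec m) as N2.
  pose proof (num_trees_pos (S m)) as P1. pose proof (num_trees_pos (S (S m))) as P2.
  pose proof (num_trees_pos (S (S (S m)))) as P3. pose proof (pos_INR m).
  rewrite !expect_S2_tree_sum, tree_sum_sub. unfold ratio. rewrite !S_INR in *.
  specialize (P1 Hn). specialize (P2 ltac:(lia)). specialize (P3 ltac:(lia)).
  set (M := INR m) in *.
  assert (E3 : tree_sum (S (S (S m))) f = ((4 * M + 6) * tree_sum (S (S m)) f
      + 4 * M * (tree_sum (S m) (fun k => f (S k)) - tree_sum (S m) f)) / (M + 3)).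
  { apply (Rmult_eq_reg_l (M + 3)); [|lra]. field_simplify; lra. }
  assert (EN3 : num_trees (S (S (S m))) = (4 * M + 6) * num_trees (S (S m)) / (M + 3)).
  { apply (Rmult_eq_reg_l (M + 3)); [|lra]. field_simplify; lra. }
  assert (EN2 : num_trees (S (S m)) = (4 * M + 2) * num_trees (S m) / (M + 2)).
  { apply (Rmult_eq_reg_l (M + 2)); [|lra]. field_simplify; lra. }
  rewrite E3, EN3, EN2. field. repeat split; nra.
Qed.

(** * Central moments *)

Definition moment (n k : nat) : R := expect_S2 n (fun m => (INR m - INR n / 4) ^ k).

Definition dcoef (j : nat) : R := (1/2) ^ j - (-1/2) ^ j.

Lemma expect_S2_binomial n (x : nat -> R) (y : R) k :
  expect_S2 n (fun m => (x m + y) ^ k)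
  = sum_f_R0 (fun i => Binomial.C k i * y ^ (k - i) * expect_S2 n (fun m => x m ^ i)) k.
Proof.
  rewrite (expect_S2_ext n _
             (fun m => sum_f_R0 (fun i => Binomial.C k i * y ^ (k - i) * x m ^ i) k)).
  - rewrite expect_S2_sum. apply sum_eq. intros i _. apply expect_S2_scal.
  - intros m. rewrite binomial. apply sum_eq. intros i _. ring.
Qed.

Lemma moment_rec n k : (1 <= n)%nat ->
  moment (S (S n)) k
  = sum_f_R0 (fun i => Binomial.C k i * (-1/4) ^ (k - i) * moment (S n) i) k
    + ratio n * sum_f_R0 (fun i => Binomial.C k i * dcoef (k - i) * moment n i) k.
Proof.
  intros Hn. unfold moment at 1. rewrite expect_S2_rec by assumption. f_equal.
  - rewrite (expect_S2_ext _ _ (fun m => ((INR m - INR (S n) / 4) + (-1/4)) ^ k)).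
    + apply expect_S2_binomial.
    + intros m. rewrite !S_INR. f_equal. field.
  - f_equal. rewrite (expect_S2_ext n _ (fun m => ((INR m - INR n / 4) + 1/2) ^ k
                                                   - ((INR m - INR n / 4) + (-1/2)) ^ k)).
    + rewrite expect_S2_sub, !expect_S2_binomial.
      symmetry. apply tech11. intros i. unfold moment, dcoef. ring.
    + intros m. rewrite !S_INR. replace (INR m + 1 - (INR n + 1 + 1) / 4) with
        ((INR m - INR n / 4) + 1/2) by field.
      replace (INR m - (INR n + 1 + 1) / 4) with ((INR m - INR n / 4) + (-1/2)) by field. ring.
Qed.

Definition moment_incr (n k : nat) : R := moment (S n) k - moment n k.

Definition ecoef (j : nat) : R := (-1/4) ^ j + dcoef j / 4.

Lemma moment_0 n : (1 <= n)%nat -> moment n 0 = 1.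
Proof. apply expect_S2_1. Qed.

Lemma moment_incr_rec n k : (1 <= n)%nat ->
  moment_incr (S n) (S k)
  = sum_f_R0 (fun i => Binomial.C (S k) i *
      (ecoef (S k - i) * moment n i + (ratio n - 1/4) * dcoef (S k - i) * moment n i
       + (-1/4) ^ (S k - i) * moment_incr n i)) k.
Proof.
  intros Hn. unfold moment_incr at 1. rewrite moment_rec, !tech5, C_n_n, Nat.sub_diag by assumption.
  replace (dcoef 0) with 0 by (unfold dcoef; simpl; ring).
  unfold moment_incr, ecoef.
  match goal with |- ?a + _ + ?r * (?c + _) - _ = _ => transitivity (a + r * c); [ring|] end.
  rewrite scal_sum, <- plus_sum. apply sum_eq. intros i _.
  unfold Rdiv. ring.
Qed.

Lemma moment_1 n : (1 <= n)%nat -> moment n 1 = INR n / (4 * (2 * INR n - 3)).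
Proof.
  intros Hn. destruct n as [|n]; [lia|]. clear Hn.
  enough (H : moment (S n) 1 = INR (S n) / (4 * (2 * INR (S n) - 3))
              /\ moment (S (S n)) 1 = INR (S (S n)) / (4 * (2 * INR (S (S n)) - 3))) by apply H.
  induction n as [|n [IH1 IH2]].
  - unfold moment.
    rewrite (expect_S2_singleton 1 Leaf), (expect_S2_singleton 2 (Node Leaf Leaf)) by reflexivity.
    split; simpl; field.
  - split; [exact IH2|].
    rewrite moment_rec by lia. simpl sum_f_R0. rewrite C_n_0, C_n_n, !moment_0, IH1, IH2 by lia.
    assert (Hn : INR n = 0 \/ 1 <= INR n).
    { destruct n; [left; reflexivity | right; rewrite S_INR; pose proof (pos_INR n); lra]. }
    unfold ratio, dcoef. rewrite !S_INR. simpl. field. repeat split; destruct Hn; nra.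
Qed.

(** * Limits of sequences *)

Lemma is_lim_seq_sum_f_R0 (N : nat) (u : nat -> nat -> R) (l : nat -> R) :
  (forall i, (i <= N)%nat -> is_lim_seq (u i) (l i)) ->
  is_lim_seq (fun n => sum_f_R0 (fun i => u i n) N) (sum_f_R0 l N).
Proof.
  induction N as [|N IH]; intros H; simpl.
  - apply H; lia.
  - apply is_lim_seq_plus'; [apply IH; intros; apply H |apply H]; lia.
Qed.

Lemma is_lim_seq_scal (u : nat -> R) (a l : R) :
  is_lim_seq u l -> is_lim_seq (fun n => a * u n) (a * l).
Proof. apply is_lim_seq_scal_l. Qed.

Lemma is_lim_seq_pow (u : nat -> R) (l : R) j :
  is_lim_seq u l -> is_lim_seq (fun n => u n ^ j) (l ^ j).
Proof.
  intros H. induction j as [|j IH]; simpl; [apply is_lim_seq_const | apply is_lim_seq_mult'; auto].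
Qed.

Lemma is_lim_seq_inv_INR : is_lim_seq (fun n => / INR n) 0.
Proof.
  replace (Finite 0) with (Rbar_inv p_infty) by reflexivity.
  apply is_lim_seq_inv; [apply is_lim_seq_INR | discriminate].
Qed.

Lemma eventually_ge1 (P : nat -> Prop) : (forall n, (1 <= n)%nat -> P n) -> eventually P.
Proof. intros H. exists 1%nat. auto. Qed.

Lemma is_lim_seq_pow_ratio p q : (p <= q)%nat ->
  is_lim_seq (fun n => INR n ^ p / INR n ^ q) (Finite (if Nat.eqb p q then 1 else 0)).
Proof.
  intros Hpq.
  apply (is_lim_seq_ext_loc (fun n => (/ INR n) ^ (q - p))).
  - apply eventually_ge1. intros n Hn. assert (0 < INR n) by (apply lt_0_INR; lia).
    replace q with (p + (q - p))%nat at 2 by lia. rewrite pow_add, pow_inv.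
    field. split; apply pow_nonzero; lra.
  - destruct (Nat.eqb_spec p q) as [->|Hne].
    + rewrite Nat.sub_diag. apply is_lim_seq_const.
    + replace 0 with (0 ^ (q - p)) by (apply pow_i; lia).
      apply is_lim_seq_pow, is_lim_seq_inv_INR.
Qed.

Lemma is_lim_seq_pow_incr h : is_lim_seq (fun n => INR n * ((1 + / INR n) ^ h - 1)) (INR h).
Proof.
  induction h as [|h IH].
  - apply (is_lim_seq_ext (fun _ => 0)); [intros; simpl; ring | apply is_lim_seq_const].
  - apply (is_lim_seq_ext_loc (fun n => (1 + / INR n) * (INR n * ((1 + / INR n) ^ h - 1)) + 1)).
    + apply eventually_ge1. intros n Hn. assert (0 < INR n) by (apply lt_0_INR; lia).
      simpl pow. field. lra.
    + rewrite S_INR. replace (INR h + 1) with ((1 + 0) * INR h + 1) by ring.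
      apply is_lim_seq_plus'; [|apply is_lim_seq_const].
      apply is_lim_seq_mult'; [|exact IH].
      apply is_lim_seq_plus'; [apply is_lim_seq_const | apply is_lim_seq_inv_INR].
Qed.

Lemma is_lim_seq_pow_diff h :
  is_lim_seq (fun n => (INR (S n) ^ h - INR n ^ h) * INR n / INR n ^ h) (INR h).
Proof.
  apply (is_lim_seq_ext_loc (fun n => INR n * ((1 + / INR n) ^ h - 1)));
    [|apply is_lim_seq_pow_incr].
  apply eventually_ge1. intros n Hn. assert (0 < INR n) by (apply lt_0_INR; lia).
  replace (INR (S n)) with (INR n * (1 + / INR n)) by (rewrite S_INR; field; lra).
  rewrite Rpow_mult_distr. field. apply pow_nonzero. lra.
Qed.

Lemma telescope (y : nat -> R) n : sum_f_R0 (fun k => y (S k) - y k) n = y (S n) - y 0%nat.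
Proof. induction n as [|n IH]; simpl; [|rewrite IH]; ring. Qed.

Section StolzCesaro.
Variables (x y : nat -> R) (a : R).
Hypotheses (y_incr : forall n, y n < y (S n)) (y_lim : is_lim_seq y p_infty)
  (quot_lim : is_lim_seq (fun n => (x (S n) - x n) / (y (S n) - y n)) a).

Lemma stolz_cesaro_from0 :
  is_lim_seq (fun n => (x (S n) - x 0%nat) / (y (S n) - y 0%nat)) a.
Proof.
  set (A n := y (S n) - y n).
  assert (HA : forall n, 0 < A n) by (intros n; specialize (y_incr n); unfold A; lra).
  apply is_lim_seq_Reals.
  eapply Un_cv_ext; [|apply (Cesaro A (fun n => (x (S n) - x n) / A n) a)].
  - intros n. rewrite <- !telescope. f_equal.
    apply sum_eq. intros i _. specialize (HA i). field. lra.
  - apply is_lim_seq_Reals, quot_lim.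
  - exact HA.
  - apply is_lim_seq_p_infty_Reals.
    apply (is_lim_seq_ext (fun n => y (S n) + - y 0%nat)).
    { intros n. unfold A. rewrite telescope. ring. }
    eapply is_lim_seq_plus;
      [apply (is_lim_seq_incr_1 y), y_lim | apply is_lim_seq_const | constructor].
Qed.

Lemma stolz_cesaro : is_lim_seq (fun n => x n / y n) a.
Proof.
  apply is_lim_seq_incr_1.
  assert (Hinv : is_lim_seq (fun n => / y (S n)) 0).
  { replace (Finite 0) with (Rbar_inv p_infty) by reflexivity.
    apply is_lim_seq_inv; [apply (is_lim_seq_incr_1 y), y_lim | discriminate]. }
  destruct (proj2 (is_lim_seq_spec y p_infty) y_lim (Rabs (y 0%nat) + 1)) as [N HN].
  apply (is_lim_seq_ext_loc (fun n => (x (S n) - x 0%nat) / (y (S n) - y 0%nat)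
                                       * (1 - y 0%nat * / y (S n)) + x 0%nat * / y (S n))).
  - exists N. intros n Hn. specialize (HN (S n) ltac:(lia)).
    pose proof (Rle_abs (y 0%nat)). pose proof (Rabs_pos (y 0%nat)).
    field. split; lra.
  - replace a with (a * (1 - y 0%nat * 0) + x 0%nat * 0) by ring.
    apply is_lim_seq_plus'; [apply is_lim_seq_mult'|]; [exact stolz_cesaro_from0 | |].
    + apply is_lim_seq_minus'; [apply is_lim_seq_const | apply is_lim_seq_scal, Hinv].
    + apply is_lim_seq_scal, Hinv.
Qed.

End StolzCesaro.

Lemma pow_lt_compat (a b : R) h : 0 <= a < b -> (1 <= h)%nat -> a ^ h < b ^ h.
Proof.
  intros Hab Hh. induction h as [|[|h] IH]; [lia | simpl; lra |].
  assert (a ^ S h < b ^ S h) by (apply IH; lia).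
  assert (0 <= a ^ S h) by (apply pow_le; lra).
  change (a * a ^ S h < b * b ^ S h). nra.
Qed.

Lemma is_lim_seq_div_pow (x : nat -> R) h a : (1 <= h)%nat ->
  is_lim_seq (fun n => (x (S n) - x n) * INR n / INR n ^ h) (INR h * a) ->
  is_lim_seq (fun n => x n / INR n ^ h) a.
Proof.
  intros Hh Hx. apply stolz_cesaro.
  - intros n. apply pow_lt_compat; [rewrite S_INR; pose proof (pos_INR n); lra | exact Hh].
  - apply (is_lim_seq_le_p_loc INR); [|apply is_lim_seq_INR].
    apply eventually_ge1. intros n Hn.
    assert (1 <= INR n) by (apply (le_INR 1); lia).
    replace h with (S (h - 1)) by lia. simpl.
    pose proof (pow_R1_Rle (INR n) (h - 1) H). nra.
  - assert (Hh0 : INR h <> 0) by (apply not_0_INR; lia).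
    replace a with (INR h * a / INR h) by (field; exact Hh0).
    apply (is_lim_seq_ext_loc (fun n => ((x (S n) - x n) * INR n / INR n ^ h) /
                                        ((INR (S n) ^ h - INR n ^ h) * INR n / INR n ^ h))).
    + apply eventually_ge1. intros n Hn. assert (0 < INR n) by (apply lt_0_INR; lia).
      assert (INR n ^ h < INR (S n) ^ h) by (apply pow_lt_compat; [rewrite S_INR; lra | exact Hh]).
      field. repeat split; try lra. apply pow_nonzero. lra.
    + apply is_lim_seq_div'; [exact Hx | apply is_lim_seq_pow_diff | exact Hh0].
Qed.

Lemma is_lim_seq_ratio_succ_pow j : is_lim_seq (fun n => (INR n / INR (S n)) ^ j) 1.
Proof.
  rewrite <- (pow1 j). apply is_lim_seq_pow.
  apply (is_lim_seq_ext (fun n => 1 - / INR (S n))).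
  - intros n. rewrite S_INR. pose proof (pos_INR n). field. lra.
  - replace (Finite 1) with (Finite (1 - 0)) by (f_equal; ring).
    apply is_lim_seq_minus'; [apply is_lim_seq_const|].
    apply (is_lim_seq_incr_1 (fun n => / INR n)), is_lim_seq_inv_INR.
Qed.

Lemma is_lim_seq_inv_affine (c d : R) : c <> 0 -> is_lim_seq (fun n => / (c - d / INR n)) (/ c).
Proof.
  intros Hc. replace (/ c) with (1 / (c - d * 0)) by (field; exact Hc).
  apply (is_lim_seq_ext (fun n => 1 / (c - d * / INR n))); [intros; unfold Rdiv; ring|].
  apply is_lim_seq_div'; [apply is_lim_seq_const | | rewrite Rmult_0_r, Rminus_0_r; exact Hc].
  apply is_lim_seq_minus'; [apply is_lim_seq_const | apply is_lim_seq_scal, is_lim_seq_inv_INR].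
Qed.

(** * The limiting constants *)

Lemma half_double q : (2 * q / 2 = q)%nat.
Proof. rewrite Nat.mul_comm. apply Nat.div_mul. lia. Qed.

Lemma half_double_S q : (S (2 * q) / 2 = q)%nat.
Proof.
  replace (S (2 * q)) with (1 + q * 2)%nat by lia. rewrite Nat.div_add by lia. reflexivity.
Qed.

Lemma INR_fact_S n : INR (fact (S n)) = (INR n + 1) * INR (fact n).
Proof. rewrite fact_simpl, mult_INR, S_INR. reflexivity. Qed.

Lemma binomial_S_pred m : Binomial.C (S m) m = INR m + 1.
Proof.
  unfold Binomial.C. replace (S m - m)%nat with 1%nat by lia.
  rewrite INR_fact_S. pose proof (INR_fact_lt_0 m). simpl. field. lra.
Qed.

Lemma binomial_SS_pred m : Binomial.C (S (S m)) m = (INR m + 2) * (INR m + 1) / 2.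
Proof.
  unfold Binomial.C. replace (S (S m) - m)%nat with 2%nat by lia.
  rewrite !INR_fact_S, S_INR. pose proof (INR_fact_lt_0 m). simpl. field. lra.
Qed.

Lemma binomial_SSS_pred m :
  Binomial.C (S (S (S m))) m = (INR m + 3) * (INR m + 2) * (INR m + 1) / 6.
Proof.
  unfold Binomial.C. replace (S (S (S m)) - m)%nat with 3%nat by lia.
  rewrite !INR_fact_S, !S_INR. pose proof (INR_fact_lt_0 m). simpl. field. lra.
Qed.

Lemma sum_f_R0_last (f : nat -> R) N : (forall i, (i < N)%nat -> f i = 0) -> sum_f_R0 f N = f N.
Proof.
  destruct N as [|N]; intros H; [reflexivity|].
  rewrite tech5, sum_eq_R0; [ring|]. intros; apply H; lia.
Qed.

Definition moment_const (k : nat) : R :=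
  INR (fact k) / (2 ^ ((k + 1) / 2) * INR (fact (k / 2)) * 4 ^ k).

Lemma moment_const_even q :
  moment_const (2 * q) = INR (fact (2 * q)) / (2 ^ q * INR (fact q) * 4 ^ (2 * q)).
Proof.
  unfold moment_const. replace (2 * q + 1)%nat with (S (2 * q)) by lia.
  rewrite half_double, half_double_S. reflexivity.
Qed.

Lemma moment_const_odd q :
  moment_const (2 * q + 1) = INR (fact (2 * q + 1)) / (2 ^ S q * INR (fact q) * 4 ^ (2 * q + 1)).
Proof.
  unfold moment_const. replace (2 * q + 1 + 1)%nat with (2 * S q)%nat by lia.
  replace (2 * q + 1)%nat with (S (2 * q)) at 2 by lia.
  rewrite half_double, half_double_S. reflexivity.
Qed.

Lemma moment_const_odd_even q :
  moment_const (2 * q + 1) = (2 * INR q + 1) / 8 * moment_const (2 * q).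
Proof.
  rewrite moment_const_odd, moment_const_even, Nat.add_1_r, INR_fact_S, mult_INR.
  pose proof (INR_fact_lt_0 (2 * q)). pose proof (INR_fact_lt_0 q).
  assert (0 < 2 ^ q) by (apply pow_lt; lra). assert (0 < 4 ^ (2 * q)) by (apply pow_lt; lra).
  rewrite <- !tech_pow_Rmult. replace (INR 2) with 2 by reflexivity. field. repeat split; lra.
Qed.

Lemma moment_const_even_S q : moment_const (2 * S q) = (2 * INR q + 1) / 16 * moment_const (2 * q).
Proof.
  rewrite !moment_const_even. replace (2 * S q)%nat with (S (S (2 * q))) by lia.
  rewrite !INR_fact_S, S_INR, mult_INR. replace (INR 2) with 2 by reflexivity.
  pose proof (INR_fact_lt_0 (2 * q)). pose proof (INR_fact_lt_0 q). pose proof (pos_INR q).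
  assert (0 < 2 ^ q) by (apply pow_lt; lra). assert (0 < 4 ^ (2 * q)) by (apply pow_lt; lra).
  rewrite <- !tech_pow_Rmult. field. repeat split; lra.
Qed.

Lemma moment_const_odd_S q :
  moment_const (2 * S q + 1) = (2 * INR q + 3) / 16 * moment_const (2 * q + 1).
Proof.
  rewrite !moment_const_odd. replace (2 * S q + 1)%nat with (S (S (2 * q + 1))) by lia.
  pose proof (INR_fact_lt_0 (2 * q + 1)). pose proof (INR_fact_lt_0 q). pose proof (pos_INR q).
  assert (0 < 2 ^ q) by (apply pow_lt; lra). assert (0 < 4 ^ (2 * q + 1)) by (apply pow_lt; lra).
  rewrite !INR_fact_S, <- !tech_pow_Rmult, !S_INR, !plus_INR, mult_INR.
  simpl INR. field. repeat split; lra.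
Qed.

Lemma ecoef_1 : ecoef 1 = 0.
Proof. unfold ecoef, dcoef. simpl. field. Qed.

(* The limit of the [i]-th summand of [moment_incr_rec] scaled by [n / n ^ (k / 2)]. *)
Definition incr_limit_term (k i : nat) : R :=
  Binomial.C k i *
  (ecoef (k - i) * moment_const i * (if Nat.eqb (S (i / 2)) (k / 2) then 1 else 0)
   + (-1/4) ^ (k - i) * (INR (i / 2) * moment_const i)
     * (if Nat.eqb (i / 2) (k / 2) then 1 else 0)).

Lemma incr_limit_term_low k q i : (k / 2 = S q)%nat -> (i < 2 * q)%nat -> incr_limit_term k i = 0.
Proof.
  intros Hk Hi. unfold incr_limit_term. rewrite Hk.
  assert (Hq : (i / 2 < q)%nat) by (apply Nat.Div0.div_lt_upper_bound; lia).
  destruct (Nat.eqb_spec (S (i / 2)) (S q)), (Nat.eqb_spec (i / 2) (S q)); [lia..|ring].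
Qed.

Lemma incr_limit_sum k : (1 <= k)%nat ->
  sum_f_R0 (incr_limit_term (S k)) k = INR (S k / 2) * moment_const (S k).
Proof.
  intros Hk. destruct (Nat.Even_or_Odd k) as [[q Hq]|[q Hq]]; subst k.
  - destruct q as [|q]; [lia|].
    replace (2 * S q)%nat with (S (S (2 * q))) by lia. rewrite !tech5.
    replace (S (S (S (2 * q)))) with (S (2 * S q)) by lia.
    rewrite (sum_f_R0_last _ (2 * q))
      by (intros; apply (incr_limit_term_low _ q); [apply half_double_S | assumption]).
    unfold incr_limit_term. rewrite half_double_S.
    replace (S (S (2 * q))) with (2 * S q)%nat by lia.
    rewrite half_double, half_double_S, half_double.
    replace (S (2 * S q) - 2 * q)%nat with 3%nat by lia.
    replace (S (2 * S q) - S (2 * q))%nat with 2%nat by lia.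
    replace (S (2 * S q) - 2 * S q)%nat with 1%nat by lia.
    rewrite Nat.eqb_refl.
    replace (Nat.eqb q (S q)) with false by (symmetry; apply Nat.eqb_neq; lia).
    replace (Nat.eqb (S (S q)) (S q)) with false by (symmetry; apply Nat.eqb_neq; lia).
    rewrite binomial_S_pred, moment_const_even_S.
    replace (S (2 * S q)) with (S (S (S (2 * q)))) by lia.
    rewrite binomial_SSS_pred, binomial_SS_pred.
    replace (S (S (S (2 * q)))) with (2 * S q + 1)%nat by lia.
    replace (S (2 * q)) with (2 * q + 1)%nat by lia.
    rewrite moment_const_odd_S, moment_const_odd_even, ecoef_1.
    replace (ecoef 2) with (1/16) by (unfold ecoef, dcoef; simpl; field).
    replace (ecoef 3) with (3/64) by (unfold ecoef, dcoef; simpl; field).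
    rewrite !plus_INR, !mult_INR, !S_INR. change (INR 0) with 0. field.
  - replace (2 * q + 1)%nat with (S (2 * q)) by lia. rewrite tech5.
    replace (S (S (2 * q))) with (2 * S q)%nat by lia.
    rewrite (sum_f_R0_last _ (2 * q))
      by (intros; apply (incr_limit_term_low _ q); [apply half_double | assumption]).
    unfold incr_limit_term. rewrite !half_double, half_double_S.
    replace (2 * S q - 2 * q)%nat with 2%nat by lia.
    replace (2 * S q - S (2 * q))%nat with 1%nat by lia.
    rewrite Nat.eqb_refl.
    replace (Nat.eqb q (S q)) with false by (symmetry; apply Nat.eqb_neq; lia).
    replace (2 * S q)%nat with (S (S (2 * q))) at 1 2 by lia.
    rewrite binomial_SS_pred, binomial_S_pred, moment_const_even_S, ecoef_1.
    replace (ecoef 2) with (1/16) by (unfold ecoef, dcoef; simpl; field).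
    rewrite !mult_INR, !S_INR. change (INR 0) with 0. field.
Qed.

(** * Asymptotics of the moments *)

Lemma ratio_sub_quarter n : ratio n - 1/4 = -3 / (16 * INR n ^ 2 - 4).
Proof.
  unfold ratio. destruct n as [|n]; [simpl; field|].
  assert (1 <= INR (S n)) by (apply (le_INR 1); lia). field. split; nra.
Qed.

Lemma is_lim_seq_ratio_sub p q : (p <= q)%nat ->
  is_lim_seq (fun n => (ratio n - 1/4) * (INR n ^ S p / INR n ^ q)) 0.
Proof.
  intros Hpq.
  apply (is_lim_seq_ext_loc
           (fun n => -3 / (16 - 4 * (/ INR n) ^ 2) * (INR n ^ p / INR n ^ q) * / INR n)).
  - apply eventually_ge1. intros n Hn. assert (1 <= INR n) by (apply (le_INR 1); lia).
    rewrite ratio_sub_quarter. simpl pow. field. repeat split; try apply pow_nonzero; nra.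
  - replace (Finite 0) with (Finite (-3 / (16 - 4 * 0 ^ 2) * (if Nat.eqb p q then 1 else 0) * 0))
      by (f_equal; ring).
    apply is_lim_seq_mult'; [apply is_lim_seq_mult'|];
      [|apply is_lim_seq_pow_ratio, Hpq | apply is_lim_seq_inv_INR].
    apply is_lim_seq_div'; [apply is_lim_seq_const| |simpl; lra].
    apply is_lim_seq_minus'; [apply is_lim_seq_const|].
    apply is_lim_seq_scal, is_lim_seq_pow, is_lim_seq_inv_INR.
Qed.

Definition moment_asymptotics (k : nat) : Prop :=
  is_lim_seq (fun n => moment n k / INR n ^ (k / 2)) (moment_const k) /\
  is_lim_seq (fun n => moment_incr n k * INR n / INR n ^ (k / 2)) (INR (k / 2) * moment_const k).

Lemma is_lim_seq_incr_term k i : (i < k)%nat -> moment_asymptotics i ->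
  is_lim_seq (fun n => Binomial.C k i *
      (ecoef (k - i) * moment n i + (ratio n - 1/4) * dcoef (k - i) * moment n i
       + (-1/4) ^ (k - i) * moment_incr n i) * INR n / INR n ^ (k / 2))
    (incr_limit_term k i).
Proof.
  intros Hik [Hmu Hincr].
  assert (Hle : (i / 2 <= k / 2)%nat) by (apply Nat.Div0.div_le_mono; lia).
  apply (is_lim_seq_ext_loc (fun n => Binomial.C k i *
      (ecoef (k - i) * (moment n i / INR n ^ (i / 2) * (INR n ^ S (i / 2) / INR n ^ (k / 2)))
       + (ratio n - 1/4) * (INR n ^ S (i / 2) / INR n ^ (k / 2)) * dcoef (k - i)
         * (moment n i / INR n ^ (i / 2))
       + (-1/4) ^ (k - i) * (moment_incr n i * INR n / INR n ^ (i / 2)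
                             * (INR n ^ (i / 2) / INR n ^ (k / 2)))))).
  { apply eventually_ge1. intros n Hn. assert (0 < INR n) by (apply lt_0_INR; lia).
    simpl pow. field. split; apply pow_nonzero; lra. }
  unfold incr_limit_term. apply is_lim_seq_scal.
  rewrite <- (Rplus_0_r (ecoef (k - i) * _ * _)).
  apply is_lim_seq_plus'; [apply is_lim_seq_plus'|].
  - destruct (Nat.leb_spec (S (i / 2)) (k / 2)) as [Hl|Hl].
    + rewrite Rmult_assoc. apply is_lim_seq_scal, is_lim_seq_mult'; [exact Hmu|].
      apply is_lim_seq_pow_ratio, Hl.
    + (* the e-term could only be too large for [i = k - 1], where [ecoef 1 = 0] *)
      assert (k = S i) by (pose proof (Nat.div_mod_eq i 2); pose proof (Nat.div_mod_eq k 2);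
        pose proof (Nat.mod_upper_bound i 2); pose proof (Nat.mod_upper_bound k 2); lia).
      subst k. replace (S i - i)%nat with 1%nat by lia. rewrite ecoef_1, !Rmult_0_l.
      apply (is_lim_seq_ext (fun _ => 0)); [intros; ring | apply is_lim_seq_const].
  - replace 0 with (0 * dcoef (k - i) * moment_const i) by ring.
    apply is_lim_seq_mult'; [apply is_lim_seq_mult'|];
      [apply is_lim_seq_ratio_sub, Hle | apply is_lim_seq_const | exact Hmu].
  - rewrite (Rmult_assoc ((-1/4) ^ (k - i))).
    apply is_lim_seq_scal, is_lim_seq_mult'; [exact Hincr|].
    apply is_lim_seq_pow_ratio, Hle.
Qed.

Lemma moment_incr_asymptotics k : (2 <= k)%nat -> (forall i, (i < k)%nat -> moment_asymptotics i) ->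
  is_lim_seq (fun n => moment_incr n k * INR n / INR n ^ (k / 2)) (INR (k / 2) * moment_const k).
Proof.
  intros Hk IH. destruct k as [|k]; [lia|].
  assert (Hh : (1 <= S k / 2)%nat) by (apply Nat.div_le_lower_bound; lia).
  rewrite <- incr_limit_sum by lia. rewrite <- (Rmult_1_r (sum_f_R0 _ _)).
  apply is_lim_seq_incr_1.
  apply (is_lim_seq_ext_loc (fun n => (moment_incr (S n) (S k) * INR n / INR n ^ (S k / 2))
                                      * (INR n / INR (S n)) ^ (S k / 2 - 1))).
  { apply eventually_ge1. intros n Hn. assert (0 < INR n) by (apply lt_0_INR; lia).
    assert (INR (S n) <> 0) by (rewrite S_INR; lra).
    set (e := (S k / 2 - 1)%nat). replace (S k / 2)%nat with (S e) by (unfold e; lia).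
    set (m := INR (S n)) in *. set (x := INR n) in *.
    replace (x / m) with (x * / m) by reflexivity.
    rewrite Rpow_mult_distr, pow_inv, <- !tech_pow_Rmult. field.
    repeat split; try apply pow_nonzero; lra. }
  apply is_lim_seq_mult'; [|apply is_lim_seq_ratio_succ_pow].
  apply (is_lim_seq_ext_loc (fun n => sum_f_R0 (fun i => Binomial.C (S k) i *
      (ecoef (S k - i) * moment n i + (ratio n - 1/4) * dcoef (S k - i) * moment n i
       + (-1/4) ^ (S k - i) * moment_incr n i) * INR n / INR n ^ (S k / 2)) k)).
  { apply eventually_ge1. intros n Hn. rewrite moment_incr_rec by assumption.
    unfold Rdiv. rewrite Rmult_assoc, (Rmult_comm (sum_f_R0 _ _)), scal_sum.
    apply sum_eq. intros i _. ring. }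
  apply is_lim_seq_sum_f_R0. intros i Hi. apply is_lim_seq_incr_term; [lia | apply IH; lia].
Qed.

Lemma moment_asymptotics_0 : moment_asymptotics 0.
Proof.
  unfold moment_asymptotics. replace (moment_const 0) with 1 by (unfold moment_const; simpl; field).
  split.
  - apply (is_lim_seq_ext_loc (fun _ => 1)); [|apply is_lim_seq_const].
    apply eventually_ge1. intros n Hn. rewrite moment_0 by assumption. simpl. field.
  - replace (INR (0 / 2) * 1) with 0 by (simpl; ring).
    apply (is_lim_seq_ext_loc (fun _ => 0)); [|apply is_lim_seq_const].
    apply eventually_ge1. intros n Hn. unfold moment_incr. rewrite !moment_0 by lia. simpl. field.
Qed.

Lemma moment_asymptotics_1 : moment_asymptotics 1.
Proof.
  unfold moment_asymptotics.
  replace (moment_const 1) with (1/8) by (unfold moment_const; simpl; field).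
  split.
  - apply (is_lim_seq_ext_loc (fun n => / 8 * / (1 - (3/2) / INR n))).
    + exists 2%nat. intros n Hn. assert (2 <= INR n) by (apply (le_INR 2); lia).
      rewrite moment_1 by lia. simpl. field. lra.
    + replace (1/8) with (/ 8 * / 1) by field.
      apply is_lim_seq_scal, is_lim_seq_inv_affine. lra.
  - replace (INR (1 / 2) * (1 / 8)) with (-3/16 * 0 * / 1 * / 1) by (simpl; field).
    apply (is_lim_seq_ext_loc
             (fun n => -3/16 * / INR n * / (1 - (1/2) / INR n) * / (1 - (3/2) / INR n))).
    + exists 2%nat. intros n Hn. assert (2 <= INR n) by (apply (le_INR 2); lia).
      unfold moment_incr. rewrite !moment_1 by lia. rewrite S_INR. simpl. field. repeat split; lra.
    + apply is_lim_seq_mult'; [apply is_lim_seq_mult' | apply is_lim_seq_inv_affine; lra].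
      * apply is_lim_seq_scal, is_lim_seq_inv_INR.
      * apply is_lim_seq_inv_affine. lra.
Qed.

Lemma moment_asymptotics_all k : moment_asymptotics k.
Proof.
  induction k as [k IH] using (well_founded_induction lt_wf).
  destruct k as [|[|k]]; [exact moment_asymptotics_0 | exact moment_asymptotics_1 |].
  assert (Hincr := moment_incr_asymptotics (S (S k)) ltac:(lia) IH).
  split; [|exact Hincr].
  apply is_lim_seq_div_pow; [apply Nat.div_le_lower_bound; lia | exact Hincr].
Qed.

Lemma moment_const_pos k : 0 < moment_const k.
Proof.
  unfold moment_const. pose proof (INR_fact_lt_0 k). pose proof (INR_fact_lt_0 (k / 2)).
  assert (0 < 2 ^ ((k + 1) / 2)) by (apply pow_lt; lra). assert (0 < 4 ^ k) by (apply pow_lt; lra).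
  apply Rdiv_lt_0_compat; [assumption|]. repeat apply Rmult_lt_0_compat; assumption.
Qed.

Theorem lemma3 (k : nat) :
  asymp_equiv
    (fun n => expect n (fun t => (INR (S2 t) - INR n / 4) ^ k))
    (fun n => INR (fact k)
              / (2 ^ (Nat.div (k + 1) 2) * INR (fact (Nat.div k 2)) * 4 ^ k)
              * INR n ^ (Nat.div k 2)).
Proof.
  destruct (moment_asymptotics_all k) as [Hmoment _].
  pose proof (moment_const_pos k) as Hpos.
  change (is_lim_seq (fun n => moment n k / (moment_const k * INR n ^ (k / 2))) 1).
  apply (is_lim_seq_ext_loc (fun n => moment n k / INR n ^ (k / 2) / moment_const k)).
  - apply eventually_ge1. intros n Hn. assert (0 < INR n) by (apply lt_0_INR; lia).
    field. split; [apply pow_nonzero|]; lra.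
  - replace (Finite 1) with (Finite (moment_const k / moment_const k)) by (f_equal; field; lra).
    apply is_lim_seq_div'; [exact Hmoment | apply is_lim_seq_const | lra].
Qed.
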